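(* Let $(\xi,\eta)$ satisfy $\xi>0$, $\eta>0$, $\xi+\eta<1$, and let $(i_n)$, $(j_n)$ be sequences of non-negative integers with $i_n/n\to\xi$ and $j_n/n\to\eta$ as $n\to\infty$. Let $A_{i,j}(1/n)$ denote the coefficient of $u^iv^jw^{n-i-j}$ in $P_{1/n}(u,v,w)$. Then $A_{i_n,j_n}(1/n)>0$ for all sufficiently large $n$, and $$\lim_{n\to\infty}\frac1n\ln A_{i_n,j_n}(1/n)=(1-\eta)\,H\!\Big(\frac{\xi}{1-\eta}\Big)+(\xi+\eta)\,H\!\Big(\frac{\xi}{\xi+\eta}\Big),$$ where $H(p)=-p\ln p-(1-p)\ln(1-p)$.
   Context: Markov polynomials. Let $x,y,z$ be indeterminates. Consider the set consisting of all rationals $\rho\in[0,1]$, each written in lowest terms $\rho=a/b$ with integers $a\ge 0$, $b\ge 1$, together with the formal symbol $1/0$. Define Laurent polynomials $M_\rho(x,y,z)$ recursively by $M_{1/0}=y$, $M_{0/1}=x$, $M_{1/1}=\frac{x^2+y^2}{z}$, and: whenever $a/b$, $c/d$ are in this set with $|ad-bc|=1$ and $(a+2c)/(b+2d)\in[0,1]$, then $M_{\frac{a+2c}{b+2d}}=\big(M_{c/d}^2+M_{\frac{a+c}{b+d}}^2\big)/M_{a/b}$. This determines $M_\rho$ for every rational $\rho\in[0,1]$. Numerator. For coprime $1\le a\le b$, $P_{a/b}(u,v,w)$ denotes the homogeneous polynomial of degree $a+b-1$ such that $M_{a/b}(x,y,z)=P_{a/b}(x^2,y^2,z^2)/(x^{a-1}y^{b-1}z^{a+b-1})$;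 its existence is known. *)

From mathcomp Require Import all_boot all_algebra fraction.
From mathcomp Require Import mpoly.

Set Implicit Arguments.
Unset Strict Implicit.
Unset Printing Implicit Defensive.
Import GRing.Theory.
Local Open Scope ring_scope.

Definition poly3 : Type := {mpoly int[3]}.

(** The field of rational functions in x,y,z; Laurent polynomials live in it. *)
Definition Frac : Type := {fraction poly3}.

Definition var3 (k : nat) : poly3 := 'X_(@inord 2 k).
Definition xF : Frac := tofrac (var3 0).
Definition yF : Frac := tofrac (var3 1).
Definition zF : Frac := tofrac (var3 2).

(** The defining recursion of the paper, applied
    with a/b = 1/(n-2), c/d = 0/1 (|1*1 - (n-2)*0| = 1, (a+2c)/(b+2d) = 1/n,
    (a+c)/(b+d) = 1/(n-1)), gives
        M_{1/n} = (M_{0/1}^2 + M_{1/(n-1)}^2) / M_{1/(n-2)},   n >= 2,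
    with M_{1/0} = y and M_{1/1} = (x^2+y^2)/z.
    [Mpair n] = (M_{1/n}, M_{1/(n+1)}). *)
Fixpoint Mpair (n : nat) : Frac * Frac :=
  match n with
  | 0 => (yF, (xF ^+ 2 + yF ^+ 2) / zF)
  | k.+1 => let: (a, b) := Mpair k in (b, (xF ^+ 2 + b ^+ 2) / a)
  end.

Definition M_one_over (n : nat) : Frac := (Mpair n).1.

(** [P] is the numerator P_{1/n}(u,v,w): homogeneous of degree a+b-1 = n and
    M_{1/n}(x,y,z) = P(x^2,y^2,z^2) / (x^{a-1} y^{b-1} z^{a+b-1})
                   = P(x^2,y^2,z^2) / (y^{n-1} z^n)      (a = 1, b = n). *)
Definition is_P_one_over (n : nat) (P : poly3) : Prop :=
  P \is n.-homog /\
  M_one_over n =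
    tofrac (P \mPo [tuple var3 0 ^+ 2; var3 1 ^+ 2; var3 2 ^+ 2])
    / tofrac (var3 1 ^+ n.-1 * var3 2 ^+ n).

(** A_{i,j}(1/n): the coefficient of u^i v^j w^(n-i-j) in P (set to 0 when
    i + j > n, where that monomial does not exist). *)
Definition coefA (P : poly3) (i j n : nat) : int :=
  if (i + j <= n)%N then P@_[multinom [tuple i; j; (n - i - j)%N]] else 0.

(* P_{1/n} is the polynomial Q_n given by Q_0 = 1, Q_1 = u + v and
   Q_{n+2} = (u + v + w) Q_{n+1} - v w Q_n.  This sequence satisfies the exchange
   relation Q_{n+2} Q_n = Q_{n+1}^2 + u v^n w^{n+1}, which after the substitution
   (u, v, w) := (x^2, y^2, z^2) and division by y^{n-1} z^n is exactly the Markov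
   recursion M_{1/(n+2)} M_{1/n} = x^2 + M_{1/(n+1)}^2.  Through R_n = Q_{n+1} - v Q_n
   the recurrence splits into two subtraction-free ones, and Pascal's rule then gives
   the coefficient of u^i v^j w^l (i >= 1) as C(i+j, j) C(i-1+l, l).
   Since C(a+b, b) a^a b^b is the largest of the a+b+1 terms of the binomial expansion
   of (a+b)^(a+b), we get ln C(a+b, b) = (a+b) H(a/(a+b)) + O(ln(a+b)), so each of the two
   binomial factors contributes one of the two entropy terms of the limit. *)

From mathcomp Require Import all_boot all_order all_algebra fraction ring zify.
Import Order.TTheory GRing.Theory Num.Theory.
Local Open Scope ring_scope.

Module MarkovNumerator.
Import mpoly.

Definition iu : 'I_3 := Ordinal (isT : (0 < 3)%N).
Definition iv : 'I_3 := Ordinal (isT : (1 < 3)%N).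
Definition iw : 'I_3 := Ordinal (isT : (2 < 3)%N).

Lemma var3E (c : 'I_3) : var3 c = 'X_c.
Proof. by rewrite /var3 inord_val. Qed.

Definition mnm3 (i j l : nat) : 'X_{1..3} := [multinom [tuple i; j; l]].

Lemma mnm3_eq i j l i' j' l' :
  (mnm3 i j l == mnm3 i' j' l') = [&& i == i', j == j' & l == l'].
Proof.
apply/eqP/and3P => [/mnmP E|[/eqP-> /eqP-> /eqP->] //].
by split; apply/eqP; [exact: (E iu) | exact: (E iv) | exact: (E iw)].
Qed.

Lemma mnm3_0 : 0%MM = mnm3 0 0 0.
Proof. by apply/mnmP => -[[|[|[|k]]] Hk]; rewrite mnm0E. Qed.

Lemma mnm3_U : U_(iu)%MM = mnm3 1 0 0.
Proof. by apply/mnmP => -[[|[|[|k]]] Hk]; rewrite mnm1E. Qed.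

Lemma mcoeffMX_eq0 (p : poly3) (c : 'I_3) (m : 'X_{1..3}) :
  m c = 0%N -> (p * 'X_c)@_m = 0.
Proof.
move=> mc0; apply: memN_msupp_eq0; rewrite (perm_mem (msuppMX p U_(c))).
by apply/mapP=> -[m' _ Em]; move: mc0; rewrite Em mnmDE mnm1E eqxx.
Qed.

Lemma mcoeffMXu (p : poly3) i j l :
  (p * 'X_iu)@_(mnm3 i j l) = if i is i'.+1 then p@_(mnm3 i' j l) else 0.
Proof.
case: i => [|i]; first exact: mcoeffMX_eq0.
have -> : mnm3 i.+1 j l = (U_(iu) + mnm3 i j l)%MM.
  by apply/mnmP => -[[|[|[|k]]] Hk] //; rewrite mnmDE mnm1E.
exact: mcoeffMX.
Qed.

Lemma mcoeffMXv (p : poly3) i j l :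
  (p * 'X_iv)@_(mnm3 i j l) = if j is j'.+1 then p@_(mnm3 i j' l) else 0.
Proof.
case: j => [|j]; first exact: mcoeffMX_eq0.
have -> : mnm3 i j.+1 l = (U_(iv) + mnm3 i j l)%MM.
  by apply/mnmP => -[[|[|[|k]]] Hk] //; rewrite mnmDE mnm1E.
exact: mcoeffMX.
Qed.

Lemma mcoeffMXw (p : poly3) i j l :
  (p * 'X_iw)@_(mnm3 i j l) = if l is l'.+1 then p@_(mnm3 i j l') else 0.
Proof.
case: l => [|l]; first exact: mcoeffMX_eq0.
have -> : mnm3 i j l.+1 = (U_(iw) + mnm3 i j l)%MM.
  by apply/mnmP => -[[|[|[|k]]] Hk] //; rewrite mnmDE mnm1E.
exact: mcoeffMX.
Qed.

Fixpoint markovQR (n : nat) : poly3 * poly3 :=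
  if n is k.+1 then
    let: (q, r) := markovQR k in
    let q' := q * 'X_iv + r in (q', q' * 'X_iu + r * 'X_iw)
  else (1, 'X_iu).

Definition markovQ n := (markovQR n).1.
Definition markovR n := (markovQR n).2.

Lemma markovQS n : markovQ n.+1 = markovQ n * 'X_iv + markovR n.
Proof. by rewrite /markovQ /markovR /=; case: (markovQR n). Qed.

Lemma markovRS n : markovR n.+1 = markovQ n.+1 * 'X_iu + markovR n * 'X_iw.
Proof. by rewrite /markovQ /markovR /=; case: (markovQR n). Qed.

Lemma markovQSS n : markovQ n.+2 =
  markovQ n.+1 * ('X_iu + 'X_iv + 'X_iw) - markovQ n * 'X_iv * 'X_iw.
Proof.
have Rn : markovR n = markovQ n.+1 - markovQ n * 'X_iv.
  by rewrite markovQS addrC addKr.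
by rewrite (markovQS n.+1) (markovRS n) Rn; ring.
Qed.

Lemma markovQ_exchange n : markovQ n.+2 * markovQ n =
  markovQ n.+1 ^+ 2 + 'X_iu * 'X_iv ^+ n * 'X_iw ^+ n.+1.
Proof.
elim: n => [|n IHn]; first by rewrite markovQSS markovQS /markovQ /markovR /=; ring.
apply/eqP; rewrite -subr_eq0; apply/eqP; transitivity ('X_iv * 'X_iw *
  (markovQ n.+2 * markovQ n - (markovQ n.+1 ^+ 2 + 'X_iu * 'X_iv ^+ n * 'X_iw ^+ n.+1))).
  by rewrite (markovQSS n.+1) (markovQSS n) !exprS; ring.
by rewrite IHn subrr mulr0.
Qed.

Definition coefQ (i j l : nat) : nat :=
  if i is i'.+1 then 'C(i + j, j) * 'C(i' + l, l) else l == 0%N.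

Definition coefR (i j l : nat) : nat :=
  if i is i'.+1 then 'C(i' + j, j) * 'C(i' + l, l) else 0.

Lemma coefQ_gt0E i j l :
  (0 < i)%N -> coefQ i j l = ('C(i + j, j) * 'C(i.-1 + l, l))%N.
Proof. by case: i. Qed.

Lemma coefQ_v0 i l : coefQ i 0 l = (coefR i 0 l + (i + l == 0%N))%N.
Proof. by case: i => [|i] /=; rewrite ?addn0 ?bin0 //; case: l. Qed.

Lemma coefQ_vS i j l : coefQ i j.+1 l = (coefQ i j l + coefR i j.+1 l)%N.
Proof.
case: i => [|i] /=; first by rewrite addn0.
by rewrite [(i.+1 + j)%N]addSnnS addSn binS mulnDl addnC.
Qed.

Lemma coefR_w0 i j : coefR i.+1 j 0 = coefQ i j 0.
Proof. by case: i => [|i] /=; rewrite !bin0 // add0n binn. Qed.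

Lemma coefR_wS i j l : coefR i.+1 j l.+1 = (coefQ i j l.+1 + coefR i.+1 j l)%N.
Proof.
case: i => [|i] /=; first by rewrite !add0n !binn.
by rewrite [(i.+1 + l)%N]addSnnS addSn binS mulnDr addnC.
Qed.

Lemma mcoeff_markovQR n i j l :
  (markovQ n)@_(mnm3 i j l) = ((i + j + l == n) * coefQ i j l)%N%:R /\
  (markovR n)@_(mnm3 i j l) = ((i + j + l == n.+1) * coefR i j l)%N%:R.
Proof.
elim: n i j l => [|n IHn].
  move=> i j l; rewrite /markovQ /markovR /= mcoeff1 mcoeffX mnm3_0 mnm3_U !mnm3_eq.
  by split; case: i => [|[|i]]; case: j => [|j]; case: l => [|l]; rewrite /= ?muln0.
have coefQS i j l :
    (markovQ n.+1)@_(mnm3 i j l) = ((i + j + l == n.+1) * coefQ i j l)%N%:R.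
  rewrite markovQS mcoeffD mcoeffMXv (IHn i j l).2.
  case: j => [|j]; last by rewrite (IHn i j l).1 coefQ_vS -natrD !addnS !addSn eqSS mulnDr.
  rewrite add0r coefQ_v0 !addn0; case: eqP => [-> | _]; last by rewrite !mul0n.
  by rewrite addn0.
move=> i j l; split=> //; rewrite markovRS mcoeffD mcoeffMXu mcoeffMXw.
case: i => [|i]; first by case: l => [|l]; rewrite ?(IHn 0%N j l).2 /= !muln0 ?addr0.
case: l => [|l]; first by rewrite addr0 coefQS coefR_w0 addSn eqSS.
by rewrite coefQS (IHn i.+1 j l).2 coefR_wS -natrD !addnS !addSn !eqSS mulnDr.
Qed.

Lemma mcoeff_markovQ n i j l :
  (markovQ n)@_(mnm3 i j l) = ((i + j + l == n) * coefQ i j l)%N%:R.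
Proof. exact: (mcoeff_markovQR n i j l).1. Qed.

Definition sq3 : 3.-tuple poly3 := [tuple var3 0 ^+ 2; var3 1 ^+ 2; var3 2 ^+ 2].

Lemma mcoeff_comp_sq3 (p : poly3) m : (p \mPo sq3)@_(m *+ 2) = p@_m.
Proof.
rewrite comp_mpolyE [in RHS](mpolyE p) !raddf_sum /=; apply: eq_bigr => m' _.
rewrite !mcoeffZ; congr (_ * _).
have -> : \prod_(c < 3) tnth sq3 c ^+ m' c = 'X_[m'] ^+ 2.
  rewrite mpolyXE_id -prodrXl; apply: eq_bigr => c _.
  have -> : tnth sq3 c = 'X_c ^+ 2.
    by rewrite -var3E; case: c => -[|[|[|k]]] Hk //; rewrite (tnth_nth 0).
  by rewrite -!exprM mulnC.
rewrite mcoeffXn mcoeffX; congr ((nat_of_bool _)%:R); apply/eqP/eqP => [/mnmP E|-> //].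
by apply/mnmP => c; have /eqP := E c; rewrite !mulmnE eqn_mul2r => /eqP.
Qed.

Lemma comp_sq3_inj : injective (comp_mpoly sq3).
Proof.
by move=> p q E; apply/mpolyP => m; rewrite -!(mcoeff_comp_sq3 _ m) E.
Qed.

Definition markovN n : Frac := tofrac (markovQ n \mPo sq3).

Lemma markovN_neq0 n : markovN n != 0.
Proof.
rewrite tofrac_eq0; apply/eqP => /(congr1 (mcoeff (mnm3 n 0 0 *+ 2))).
rewrite mcoeff_comp_sq3 mcoeff_markovQ mcoeff0 !addn0 eqxx mul1n.
by case: n => [|n] //=; rewrite !bin0.
Qed.

Lemma comp_sq3X (c : 'I_3) : 'X_c \mPo sq3 = var3 c ^+ 2.
Proof. by rewrite comp_mpolyXU; case: c => -[|[|[|k]]]. Qed.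

Lemma markovN_exchange n : markovN n.+2 * markovN n =
  markovN n.+1 ^+ 2 + xF ^+ 2 * (yF ^+ 2) ^+ n * (zF ^+ 2) ^+ n.+1.
Proof.
rewrite /markovN /xF /yF /zF -!tofracXn -!tofracM -tofracD; congr tofrac.
rewrite -(comp_sq3X iu) -(comp_sq3X iv) -(comp_sq3X iw).
rewrite -!(rmorphXn (comp_mpoly sq3)) -!(rmorphM (comp_mpoly sq3)) -rmorphD.
by rewrite markovQ_exchange.
Qed.

Lemma markovN0 : markovN 0 = 1.
Proof. by rewrite /markovN /markovQ /= comp_mpoly1 tofrac1. Qed.

Lemma markovN1 : markovN 1 = xF ^+ 2 + yF ^+ 2.
Proof.
rewrite /markovN markovQS /markovQ /markovR /= mul1r addrC comp_mpolyD !comp_sq3X.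
by rewrite tofracD !tofracXn.
Qed.

Lemma markov_exchange_step (F : fieldType) (x y z a b c : F) n :
  y != 0 -> z != 0 -> a != 0 ->
  c * a = b ^+ 2 + x ^+ 2 * (y ^+ 2) ^+ n * (z ^+ 2) ^+ n.+1 ->
  (x ^+ 2 + (b * y / (y * z) ^+ n.+1) ^+ 2) / (a * y / (y * z) ^+ n) =
  c * y / (y * z) ^+ n.+2.
Proof.
move=> y0 z0 a0 E.
have -> : c = (b ^+ 2 + x ^+ 2 * (y ^+ 2) ^+ n * (z ^+ 2) ^+ n.+1) / a by rewrite -E mulfK.
have yn0 : y ^+ n != 0 by rewrite expf_neq0.
have zn0 : z ^+ n != 0 by rewrite expf_neq0.
rewrite (exprAC y 2) (exprAC z 2) !exprS exprMn.
by field; rewrite a0 y0 z0 yn0 zn0.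
Qed.

Lemma var3_frac_neq0 (c : 'I_3) : tofrac (var3 c) != 0.
Proof.
rewrite tofrac_eq0 var3E; apply/eqP => /(congr1 (mcoeff U_(c))).
by rewrite mcoeffX eqxx mcoeff0.
Qed.

(* M_{1/n} = markovN n / (y^{n-1} z^n), in a form that avoids n - 1 at n = 0. *)
Lemma Mpair_markovN n : Mpair n =
  (markovN n * yF / (yF * zF) ^+ n, markovN n.+1 * yF / (yF * zF) ^+ n.+1).
Proof.
have y0 : yF != 0 := var3_frac_neq0 iv.
have z0 : zF != 0 := var3_frac_neq0 iw.
elim: n => [|n IHn].
  rewrite markovN0 markovN1 [Mpair 0]/Mpair; congr pair.
    by rewrite expr0 invr1 mulr1 mul1r.
  by rewrite expr1 invfM mulrA (mulfK y0).
rewrite /= IHn; congr pair.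
exact: markov_exchange_step y0 z0 (markovN_neq0 n) (markovN_exchange n).
Qed.

Lemma M_one_over_markovN n : M_one_over n = markovN n * yF / (yF * zF) ^+ n.
Proof. by rewrite /M_one_over Mpair_markovN. Qed.

Lemma is_P_one_over_markovQ n P : is_P_one_over n.+1 P -> P = markovQ n.+1.
Proof.
have y0 : yF != 0 := var3_frac_neq0 iv.
have d0 : yF ^+ n * zF ^+ n.+1 != 0.
  exact: mulf_neq0 (expf_neq0 n y0) (expf_neq0 n.+1 (var3_frac_neq0 iw)).
case=> _; rewrite M_one_over_markovN tofracM !tofracXn -/sq3.
rewrite -[n.+1.-1]/n -/yF -/zF exprMn exprS -[yF * _ * _]mulrA invfM mulrA (mulfK y0).
move=> /(mulIf (invr_neq0 d0)) EM.
by apply: comp_sq3_inj; apply/eqP; rewrite -tofrac_eq -EM.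
Qed.

Lemma coefA_markov {n : nat} {P : poly3} : (0 < n)%N -> is_P_one_over n P ->
  forall i j, (i + j <= n)%N -> coefA P i j n = (coefQ i j (n - i - j))%:R.
Proof.
case: n => [//|n] _ /is_P_one_over_markovQ -> i j hij.
by rewrite /coefA hij -/(mnm3 _ _ _) mcoeff_markovQ -subnDA subnKC // eqxx mul1n.
Qed.

End MarkovNumerator.

Section BinomialMaxTerm.
Local Open Scope nat_scope.
Variables a b : nat.

Let term k := 'C(a + b, k) * (a ^ (a + b - k) * b ^ k).

Lemma binomial_term_ratio k : k < a + b ->
  term k.+1 * (k.+1 * a) = term k * ((a + b - k) * b).
Proof.
move=> lt_k_ab; rewrite /term -(subnSK lt_k_ab) expnS expnSr.
transitivity (k.+1 * 'C(a + b, k.+1) * (a ^ (a + b - k.+1) * a * b ^ k * b)); first ring.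
by rewrite mul_bin_left (subnSK lt_k_ab); ring.
Qed.

Hypothesis a_gt0 : 0 < a.

Lemma binomial_term_max k : term k <= term b.
Proof.
have pos i : 0 < i.+1 * a by rewrite muln_gt0.
have [le_kb | lt_bk] := leqP k b.
  have incr : {in [pred i | i <= b] &, {homo term : i j / i <= j}}.
    apply: homo_leq_in => //; first exact: leq_trans.
      by move=> i j _; rewrite !inE => le_jb k' /andP[_ /ltnW/leq_trans]; apply.
    move=> i _; rewrite inE => lt_ib.
    rewrite -(leq_pmul2r (pos i)) binomial_term_ratio; last lia.
    by apply: leq_mul => //; nia.
  by apply: incr; rewrite ?inE.
have decr : {in [pred i | b <= i] &, {homo term : i j / i <= j >-> j <= i}}.
  apply: (@homo_leq_in _ _ term (fun x y => y <= x)) => //.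
  - by move=> x y z le_xy le_zx; exact: leq_trans le_zx le_xy.
  - by move=> i j; rewrite inE => le_bi _ k' /andP[/ltnW + _]; apply: leq_trans.
  move=> i; rewrite inE => le_bi _; have [lt_i_ab | le_ab_i] := ltnP i (a + b).
    rewrite -(leq_pmul2r (pos i)) binomial_term_ratio //.
    by apply: leq_mul => //; nia.
  by rewrite /term bin_small ?mul0n //; lia.
by apply: decr; rewrite ?inE // ltnW.
Qed.

Lemma bin_expn_upper : 'C(a + b, b) * (a ^ a * b ^ b) <= (a + b) ^ (a + b).
Proof.
rewrite expnDn (bigD1 (inord b)) //= inordK ?ltnS ?leq_addl //.
by rewrite addnK leq_addr.
Qed.

Lemma bin_expn_lower :
  (a + b) ^ (a + b) <= (a + b).+1 * ('C(a + b, b) * (a ^ a * b ^ b)).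
Proof.
have -> : 'C(a + b, b) * (a ^ a * b ^ b) = term b by rewrite /term addnK.
rewrite expnDn; apply: (@leq_trans (\sum_(k < (a + b).+1) term b)).
  by apply: leq_sum => k _; exact: binomial_term_max.
by rewrite sum_nat_const card_ord.
Qed.

End BinomialMaxTerm.

From mathcomp Require Import all_classical all_reals all_analysis lra.
Import Order.TTheory GRing.Theory Num.Theory.
Import numFieldNormedType.Exports.
Local Open Scope classical_set_scope.
Local Open Scope ring_scope.

Section Entropy.
Context {R : realType}.

Definition xlnx (x : R) := x * ln x.

Definition binent (x y : R) := xlnx (x + y) - xlnx x - xlnx y.

Definition entropy (p : R) := - (p * ln p) - (1 - p) * ln (1 - p).

Lemma binent_entropy (x y : R) : 0 < x -> 0 < y ->
  (x + y) * entropy (x / (x + y)) = binent x y.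
Proof.
move=> x0 y0; have xy0 : 0 < x + y by rewrite addr_gt0.
rewrite /entropy; have -> : 1 - x / (x + y) = y / (x + y) by field; rewrite gt_eqF //.
rewrite /binent /xlnx !ln_div ?posrE //; field; rewrite gt_eqF //.
Qed.

Lemma binentZ (x y t : R) : 0 < x -> 0 < y -> 0 < t ->
  binent (x / t) (y / t) = binent x y / t.
Proof.
move=> x0 y0 t0; have xy0 : 0 < x + y by rewrite addr_gt0.
rewrite /binent /xlnx -mulrDl !ln_div ?posrE //; field; rewrite gt_eqF //.
Qed.

Lemma binent_ln_bin (a b : nat) : (0 < a)%N -> (0 < b)%N ->
  0 <= binent a%:R b%:R - ln 'C(a + b, b)%:R <= ln (a + b).+1%:R.
Proof.
move=> a0 b0; have ab0 : (0 < a + b)%N by rewrite addn_gt0 a0.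
have C0 : (0 < 'C(a + b, b))%N by rewrite bin_gt0 leq_addl.
have ln_le (k l : nat) : (k <= l)%N -> (0 < k)%N -> ln k%:R <= ln l%:R :> R.
  by move=> le_kl k0; rewrite ler_ln ?posrE ?ltr0n ?(leq_trans k0) // ler_nat.
have pow_pos : (0 < (a + b) ^ (a + b))%N by rewrite expn_gt0 ab0.
have pos : (0 < 'C(a + b, b) * (a ^ a * b ^ b))%N.
  by rewrite !muln_gt0 !expn_gt0 C0 a0 b0.
have lnM (k l : nat) : (0 < k)%N -> (0 < l)%N -> ln (k * l)%:R = ln k%:R + ln l%:R :> R.
  by move=> k0 l0; rewrite natrM lnM // posrE ltr0n.
have lnX (k : nat) : (0 < k)%N -> ln (k ^ k)%:R = xlnx k%:R :> R.
  by move=> k0; rewrite natrX lnXn ?ltr0n // /xlnx mulr_natl.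
have up := ln_le _ _ (bin_expn_upper a b) pos.
have lo := ln_le _ _ (bin_expn_lower a b a0) pow_pos.
rewrite !lnM ?lnX ?muln_gt0 ?expn_gt0 ?C0 ?a0 ?b0 ?ab0 // in up lo.
by rewrite /binent -natrD; apply/andP; split; lra.
Qed.

Lemma cvg_xlnx {u : nat -> R} {c : R} : 0 < c -> u @ \oo --> c ->
  (fun n => xlnx (u n)) @ \oo --> xlnx c.
Proof. by move=> c0 uc; apply: cvgM uc (continuous_cvg _ (continuous_ln c0) uc). Qed.

Lemma cvg_binent {u v : nat -> R} {a b : R} : 0 < a -> 0 < b ->
  u @ \oo --> a -> v @ \oo --> b -> (fun n => binent (u n) (v n)) @ \oo --> binent a b.
Proof.
move=> a0 b0 ua vb; apply: cvgB; first apply: cvgB.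
- by apply: cvg_xlnx (cvgD ua vb); rewrite addr_gt0.
- exact: cvg_xlnx.
- exact: cvg_xlnx.
Qed.

End Entropy.

Lemma cvg_near_eq (T : Type) (U : topologicalType) (F : set_system T) {FF : Filter F}
    (f g : T -> U) (l : U) :
  (\forall x \near F, f x = g x) -> f @ F --> l -> g @ F --> l.
Proof. by move=> fg fl; apply: cvg_trans fl; exact: near_eq_cvg. Qed.

Section Ratio.
Context {R : realType}.

Definition ratio (u : nat -> nat) (n : nat) : R := (u n)%:R / n%:R.

Lemma cvg_inv_nat : (fun n : nat => (n%:R : R)^-1) @ \oo --> 0.
Proof. rewrite -cvg_shiftS; exact: cvg_harmonic. Qed.

Lemma cvg_ln_nat_div : (fun n : nat => ln (n%:R : R) / n%:R) @ \oo --> 0.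
Proof.
apply/cvgrPdist_le => e e0; near=> n.
have n1 : 1 <= (n%:R : R) by near: n; exact: nbhs_infty_ger.
have n2 : 2 / e ^+ 2 <= (n%:R : R) by near: n; exact: nbhs_infty_ger.
have n0 : 0 < (n%:R : R) by lra.
rewrite sub0r normrN ger0_norm ?divr_ge0 ?ln_ge0 ?ler0n // ler_pdivrMr //.
rewrite -(expRK (e * n%:R)) ler_ln ?posrE ?expR_gt0 //.
apply: le_trans (expR_ge1Dxn 1 _); last by rewrite mulr_ge0 ?ler0n ?ltW.
have n2e : 2 <= n%:R * e ^+ 2 by rewrite -ler_pdivrMr ?exprn_gt0.
rewrite -[2`!%:R]/(2 : R) exprMn; nra.
Unshelve. all: by end_near.
Qed.

Lemma cvg_ratio_gt0 {u : nat -> nat} {c : R} : 0 < c -> ratio u @ \oo --> c ->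
  \forall n \near \oo, (0 < u n)%N.
Proof.
move=> c0 uc; near=> n.
have : 0 < ratio u n by near: n; exact: cvgr_gt c uc 0 c0.
by rewrite /ratio lt0n; apply: contraTneq => ->; rewrite mul0r ltxx.
Unshelve. all: by end_near.
Qed.

Lemma cvg_ratio_lt {u : nat -> nat} {c : R} : c < 1 -> ratio u @ \oo --> c ->
  \forall n \near \oo, (u n < n)%N.
Proof.
move=> c1 uc; near=> n.
have n0 : (0 < n)%N by near: n; exact: nbhs_infty_gt.
have : ratio u n < 1 by near: n; exact: cvgr_lt c uc 1 c1.
by rewrite /ratio ltr_pdivrMr ?ltr0n // mul1r ltr_nat.
Unshelve. all: by end_near.
Qed.

Lemma cvg_ratioD {u v : nat -> nat} {a b : R} :
  ratio u @ \oo --> a -> ratio v @ \oo --> b -> ratio (fun n => u n + v n)%N @ \oo --> a + b.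
Proof.
move=> ua vb; rewrite (_ : ratio _ = ratio u + ratio v); first exact: cvgD.
by apply/funext => n; rewrite /ratio natrD mulrDl.
Qed.

Lemma cvg_ratio_pred {u : nat -> nat} {c : R} : 0 < c -> ratio u @ \oo --> c ->
  ratio (fun n => (u n).-1) @ \oo --> c.
Proof.
move=> c0 uc; apply: (@cvg_near_eq _ _ _ _ (fun n => ratio u n - n%:R^-1)).
  near=> n; have u0 : (0 < u n)%N by near: n; exact: cvg_ratio_gt0 c0 uc.
  by rewrite /ratio -{1}(prednK u0) -natr1 mulrDl mul1r addrK.
by rewrite -[c]subr0; apply: cvgB uc cvg_inv_nat.
Unshelve. all: by end_near.
Qed.

Lemma cvg_ratioS {u : nat -> nat} {c : R} : ratio u @ \oo --> c ->
  ratio (fun n => (u n).+1) @ \oo --> c.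
Proof.
move=> uc; rewrite (_ : ratio _ = fun n => ratio u n + n%:R^-1).
  by rewrite -[c]addr0; apply: cvgD uc cvg_inv_nat.
by apply/funext => n; rewrite /ratio -natr1 mulrDl mul1r.
Qed.

Lemma cvg_ratio_compl {u : nat -> nat} {c : R} : c < 1 -> ratio u @ \oo --> c ->
  ratio (fun n => n - u n)%N @ \oo --> 1 - c.
Proof.
move=> c1 uc; apply: (@cvg_near_eq _ _ _ _ (fun n => 1 - ratio u n)).
  near=> n; have n0 : (0 < n)%N by near: n; exact: nbhs_infty_gt.
  have lt_un : (u n < n)%N by near: n; exact: cvg_ratio_lt c1 uc.
  by rewrite /ratio natrB ?(ltnW lt_un) // mulrBl divff // pnatr_eq0 -lt0n.
by apply: cvgB uc; exact: cvg_cst.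
Unshelve. all: by end_near.
Qed.

Lemma cvg_ln_ratio {u : nat -> nat} {c : R} : 0 < c -> ratio u @ \oo --> c ->
  (fun n => ln (u n)%:R / n%:R : R) @ \oo --> 0.
Proof.
move=> c0 uc.
apply: (@cvg_near_eq _ _ _ _ (fun n => ln (ratio u n) / n%:R + ln n%:R / n%:R)).
  near=> n; have n0 : (0 < n)%N by near: n; exact: nbhs_infty_gt.
  have u0 : (0 < u n)%N by near: n; exact: cvg_ratio_gt0 c0 uc.
  by rewrite /ratio ln_div ?posrE ?ltr0n // mulrBl subrK.
rewrite -[0]addr0; apply: cvgD cvg_ln_nat_div.
rewrite -(mulr0 (ln c)); apply: cvgM cvg_inv_nat.
exact: continuous_cvg _ (continuous_ln c0) uc.
Unshelve. all: by end_near.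
Qed.

Lemma cvg_ln_binomial {a b : nat -> nat} {alpha beta : R} : 0 < alpha -> 0 < beta ->
  ratio a @ \oo --> alpha -> ratio b @ \oo --> beta ->
  (fun n => ln 'C(a n + b n, b n)%:R / n%:R) @ \oo --> binent alpha beta.
Proof.
move=> alpha0 beta0 ha hb.
pose gap n : R := binent (a n)%:R (b n)%:R - ln 'C(a n + b n, b n)%:R.
have gap_bounds : \forall n \near \oo,
    0 <= gap n / n%:R <= ln (a n + b n).+1%:R / n%:R.
  near=> n; have n0 : (0 < n)%N by near: n; exact: nbhs_infty_gt.
  have a0 : (0 < a n)%N by near: n; exact: cvg_ratio_gt0 alpha0 ha.
  have b0 : (0 < b n)%N by near: n; exact: cvg_ratio_gt0 beta0 hb.
  have /andP[gap0 gap_le] := binent_ln_bin (R := R) _ _ a0 b0.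
  by rewrite divr_ge0 ?ler0n //= ler_pM2r ?invr_gt0 ?ltr0n.
have gap_small : (fun n => gap n / n%:R) @ \oo --> 0.
  apply: (squeeze_cvgr gap_bounds); first exact: cvg_cst.
  apply: (@cvg_ln_ratio (fun n => (a n + b n).+1) (alpha + beta)).
    by rewrite addr_gt0.
  by apply: cvg_ratioS; apply: cvg_ratioD.
apply: (@cvg_near_eq _ _ _ _ (fun n => binent (ratio a n) (ratio b n) - gap n / n%:R)).
  near=> n; have n0 : (0 < n)%N by near: n; exact: nbhs_infty_gt.
  have a0 : (0 < a n)%N by near: n; exact: cvg_ratio_gt0 alpha0 ha.
  have b0 : (0 < b n)%N by near: n; exact: cvg_ratio_gt0 beta0 hb.
  by rewrite /ratio binentZ ?ltr0n // -mulrBl /gap opprB addrC subrK.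
by rewrite -[binent _ _]subr0; apply: cvgB gap_small; exact: cvg_binent.
Unshelve. all: by end_near.
Qed.

End Ratio.

Import MarkovNumerator.

Theorem proposition7p3 (R : realType) (xi eta : R) (i j : nat -> nat)
    (P : nat -> poly3) :
  0 < xi -> 0 < eta -> xi + eta < 1 ->
  (fun n : nat => (i n)%:R / n%:R : R) @ \oo --> xi ->
  (fun n : nat => (j n)%:R / n%:R : R) @ \oo --> eta ->
  (forall n : nat, (1 <= n)%N -> is_P_one_over n (P n)) ->
  let H := fun p : R => - (p * ln p) - (1 - p) * ln (1 - p) in
  (exists N : nat, forall n : nat, (N <= n)%N ->
      (0 < coefA (P n) (i n) (j n) n)%R) /\
  (fun n : nat => ln ((coefA (P n) (i n) (j n) n)%:~R : R) / n%:R) @ \oo -->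
     (1 - eta) * H (xi / (1 - eta)) + (xi + eta) * H (xi / (xi + eta)).
Proof.
move=> xi0 eta0 xe1 hi hj HP H.
have hij := cvg_ratioD hi hj.
pose l n := (n - (i n + j n))%N.
pose C1 n := 'C(i n + j n, j n); pose C2 n := 'C((i n).-1 + l n, l n).
have coefAE : \forall n \near \oo, coefA (P n) (i n) (j n) n = (C1 n * C2 n)%:R.
  near=> n; have n0 : (0 < n)%N by near: n; exact: nbhs_infty_gt.
  have i0 : (0 < i n)%N by near: n; exact: cvg_ratio_gt0 xi0 hi.
  have ij_lt : (i n + j n < n)%N by near: n; exact: cvg_ratio_lt xe1 hij.
  by rewrite (coefA_markov n0 (HP n n0) _ _ (ltnW ij_lt)) coefQ_gt0E // -subnDA.
have C_gt0 n : (0 < C1 n)%N && (0 < C2 n)%N by rewrite !bin_gt0 !leq_addl.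
split.
  have [N _ HN] := coefAE; exists N => n /HN ->.
  by rewrite ltr0n muln_gt0 C_gt0.
have -> : (1 - eta) * H (xi / (1 - eta)) = binent xi (1 - (xi + eta)).
  have -> : 1 - eta = xi + (1 - (xi + eta)) by ring.
  by rewrite binent_entropy ?subr_gt0.
have -> : (xi + eta) * H (xi / (xi + eta)) = binent xi eta by rewrite -binent_entropy.
rewrite addrC; apply: cvg_near_eq; last first.
  apply: cvgD; first exact: cvg_ln_binomial xi0 eta0 hi hj.
  apply: (cvg_ln_binomial xi0 _ (cvg_ratio_pred xi0 hi) (cvg_ratio_compl xe1 hij)).
  by rewrite subr_gt0.
apply: filterS coefAE => n ->; have /andP[C1_gt0 C2_gt0] := C_gt0 n.
by rewrite /= mulrz_nat natrM lnM ?posrE ?ltr0n // mulrDl.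
Unshelve. all: by end_near.
Qed.
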